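(* Let $\mu\in(0,1/2]$ and let $R_{\text{int}},R^{E}_{\text{ext}},R^{M}_{\text{ext}},R_{\text{dou}},R_{\text{ell}}$ be the rotation functions defined in the context. Then: (a) $R_{\text{int}}$ is strictly increasing on $(-\infty,c_J)$, with $\lim_{c\to-\infty}R_{\text{int}}(c)=1$ and $\lim_{c\to c_J}R_{\text{int}}(c)=\infty$. (b) $R^{E}_{\text{ext}}$ is strictly increasing on $(-\infty,0)$ with $\lim_{c\to-\infty}R^{E}_{\text{ext}}(c)=1$; in the symmetric case $\mu=1/2$ one has $\lim_{c\to0^-}R^E_{\text{ext}}(c)=\infty$. (c) $R^{M}_{\text{ext}}$ is strictly increasing on $(-\infty,c_h)$ with $\lim_{c\to-\infty}R^M_{\text{ext}}(c)=1$ and $\lim_{c\to c_h}R^M_{\text{ext}}(c)=\infty$; for $c\in(c_h,0)$, $R^M_{\text{ext}}(c)=\infty$. (d) $R_{\text{dou}}$ is strictly decreasing on $(c_J,c_e)$ with $\lim_{c\to c_J}R_{\text{dou}}(c)=\infty$ and $\lim_{c\to c_e}R_{\text{dou}}(c)=0$; for $c\in(c_e,0)$, $R_{\text{dou}}(c)=0$. (e) $R_{\text{hyp}}=\infty$ on $(c_J,c_h)$. (f) $R_{\text{ell}}$ is strictly increasing on $(c_e,0)$ with $\lim_{c\to c_e}R_{\text{ell}}(c)=0$ and $\lim_{c\to0^-}R_{\text{ell}}(c)=1$.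
   Context: Fix a mass ratio $\mu\in(0,1/2]$ and consider the Euler problem of two fixed centers with Hamiltonian $H(q,p)=\tfrac12|p|^2-\frac{1-\mu}{|q-E|}-\frac{\mu}{|q-M|}$ on $(\mathbb R^2\setminus\{E,M\})\times\mathbb R^2$, $E=(-1/2,0)$, $M=(1/2,0)$. Put $c_J=-1-2\sqrt{\mu(1-\mu)}$ (critical Jacobi energy), $c_e=-1$, $c_h=-1+2\mu$. Let $K(k)=\int_0^{\pi/2}(1-k^2\sin^2\theta)^{-1/2}\,d\theta=\frac{\pi}{2}\sum_{n\ge0}\big(\frac{(2n-1)!!}{(2n)!!}\big)^2k^{2n}$ ($0\le k^2<1$), the complete elliptic integral of the first kind, with $K(1)=+\infty$. The rotation number of an orbit is the ratio $\tau_\eta/\tau_\xi$ of the periods of its oscillations in the elliptic coordinates $\xi=|q-E|+|q-M|$, $\eta=|q-E|-|q-M|$. For the critical periodic orbits this gives the following functions of the energy $c$: - Interior collision orbit ($c<c_J$): $R_{\text{int}}(c)=\frac{2}{\pi}\sqrt{1+r^2}\,K(r)$, where $r^2=\frac{-c-1-A}{-c-1+A}$, $A=\sqrt{c^2+2c+(1-2\mu)^2}$. - Exterior collision orbit in the Earth component ($c<0$): $R^E_{\text{ext}}(c)=\frac{\pi}{2}\frac{1}{\sqrt{1-2k^2}\,K(k)}$, where $k^2=\frac12\big(1-\frac{1-2\mu-c}{\sqrt{c^2-2(1-2\mu)c+1}}\big)$. - Exterior collision orbit in the Moon component ($c<0$): $R^M_{\text{ext}}(c)=\frac{K(r_1)}{\sqrt{|2k^2-1|}\,K(k)}$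 where $k^2=\frac12\big(1+\frac{c+1-2\mu}{\sqrt{c^2+2(1-2\mu)c+1}}\big)$ and $r_1^2=\frac12\big(1+\frac{c+1-2\mu}{|c+1-2\mu|}\big)$ (so $r_1=0$ for $c<c_h$ and $r_1=1$, $K(r_1)=\infty$, for $c>c_h$). - Double-collision orbit: for $c\in(c_J,c_e)$, $R_{\text{dou}}(c)=\frac{2}{\pi}\sqrt{4r_4^2-2}\,K(r_4)$ with $r_4^2=\frac12\big(1-\frac{c+1}{2\sqrt{\mu(1-\mu)}}\big)$; for $c\in(c_e,0)$ the $\xi$-period of this orbit is infinite, so its rotation number is $0$. - Hyperbolic orbit ($c_J<c<c_h$): its $\eta$-period is infinite (it lies on the curve $gc=(1-2\mu)^2$ where the two $\eta$-roots coincide), so $R_{\text{hyp}}=\infty$. - Elliptic orbit ($c_e<c<0$): $R_{\text{ell}}(c)=\frac{2}{\pi}\sqrt{1-2r_4^2}\,K(r_4)$ with $r_4^2=\frac12\big(1+\frac{c^2-1}{\sqrt{c^4+2c^2+1-4(1-2\mu)^2c^2}}\big)$. *)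

From Stdlib Require Import Reals Lra Lia Classical ClassicalEpsilon.
Open Scope R_scope.

Inductive ER : Type := Fin (x : R) | PInf.

Definition ER_lt (x y : ER) : Prop :=
  match x, y with
  | Fin a, Fin b => a < b
  | Fin _, PInf => True
  | PInf, _ => False
  end.

Definition ER_gt (x : ER) (M : R) : Prop :=
  match x with Fin a => M < a | PInf => True end.

Definition ER_close (x : ER) (L eps : R) : Prop :=
  match x with Fin a => Rabs (a - L) < eps | PInf => False end.

(* a * x for a real factor a (used only with a > 0) *)
Definition ER_mul (a : R) (x : ER) : ER :=
  match x with Fin v => Fin (a * v) | PInf => PInf end.

(* quotient x / y of positive quantities, with finite/infinity = 0 and
   infinity/finite = infinity (infinity/infinity never occurs; set to PInf) *)
Definition ER_div (x y : ER) : ER :=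
  match x, y with
  | Fin a, Fin b => Fin (a / b)
  | PInf, Fin _ => PInf
  | Fin _, PInf => Fin 0
  | PInf, PInf => PInf
  end.

Definition strictly_increasing_on (P : R -> Prop) (f : R -> ER) : Prop :=
  forall x y, P x -> P y -> x < y -> ER_lt (f x) (f y).
Definition strictly_decreasing_on (P : R -> Prop) (f : R -> ER) : Prop :=
  forall x y, P x -> P y -> x < y -> ER_lt (f y) (f x).

Definition lim_minfty_fin (f : R -> ER) (L : R) : Prop :=
  forall eps, 0 < eps -> exists N, forall c, c < N -> ER_close (f c) L eps.
Definition lim_left_fin (f : R -> ER) (a L : R) : Prop :=
  forall eps, 0 < eps -> exists d, 0 < d /\
    forall c, a - d < c < a -> ER_close (f c) L eps.
Definition lim_right_fin (f : R -> ER) (a L : R) : Prop :=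
  forall eps, 0 < eps -> exists d, 0 < d /\
    forall c, a < c < a + d -> ER_close (f c) L eps.
Definition lim_left_inf (f : R -> ER) (a : R) : Prop :=
  forall M, exists d, 0 < d /\ forall c, a - d < c < a -> ER_gt (f c) M.
Definition lim_right_inf (f : R -> ER) (a : R) : Prop :=
  forall M, exists d, 0 < d /\ forall c, a < c < a + d -> ER_gt (f c) M.

(* limit of a real sequence (0 if it does not converge) *)
Definition seq_lim (u : nat -> R) : R :=
  match excluded_middle_informative (exists l, Un_cv u l) with
  | left H => proj1_sig (constructive_indefinite_description _ H)
  | right _ => 0
  end.

(* double factorial n!!, with 0!! = 1 (so (2n-1)!! = 1 for n = 0, using
   truncated nat subtraction, matching the convention (-1)!! = 1) *)
Fixpoint dfact (n : nat) : nat :=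
  match n with
  | O => 1%nat
  | S O => 1%nat
  | S (S m as p) => (S p * dfact m)%nat
  end.

Definition K_coef (n : nat) : R :=
  (INR (dfact (2 * n - 1)) / INR (dfact (2 * n))) ^ 2.

(* K(k) = pi/2 * sum_n ((2n-1)!!/(2n)!!)^2 k^(2n) for k^2 < 1, K = +infinity
   for k^2 >= 1 (only k^2 = 1 is ever used, where K(1) = +infinity) *)
Definition K (k : R) : ER :=
  if Rlt_dec (k ^ 2) 1
  then Fin (PI / 2 * seq_lim (fun N => sum_f_R0 (fun n => K_coef n * k ^ (2 * n)) N))
  else PInf.

Definition c_J (mu : R) : R := -1 - 2 * sqrt (mu * (1 - mu)).
Definition c_e : R := -1.
Definition c_h (mu : R) : R := -1 + 2 * mu.

Definition R_int (mu c : R) : ER :=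
  let A := sqrt (c ^ 2 + 2 * c + (1 - 2 * mu) ^ 2) in
  let r2 := (- c - 1 - A) / (- c - 1 + A) in
  ER_mul (2 / PI * sqrt (1 + r2)) (K (sqrt r2)).

Definition R_ext_E (mu c : R) : ER :=
  let k2 := / 2 * (1 - (1 - 2 * mu - c) / sqrt (c ^ 2 - 2 * (1 - 2 * mu) * c + 1)) in
  ER_div (Fin (PI / 2)) (ER_mul (sqrt (1 - 2 * k2)) (K (sqrt k2))).

Definition R_ext_M (mu c : R) : ER :=
  let k2 := / 2 * (1 + (c + 1 - 2 * mu) / sqrt (c ^ 2 + 2 * (1 - 2 * mu) * c + 1)) in
  let r12 := / 2 * (1 + (c + 1 - 2 * mu) / Rabs (c + 1 - 2 * mu)) in
  ER_div (K (sqrt r12)) (ER_mul (sqrt (Rabs (2 * k2 - 1))) (K (sqrt k2))).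

(* double-collision orbit: formula on (c_J, c_e); rotation number 0 for
   c > c_e, where its xi-period is infinite *)
Definition R_dou (mu c : R) : ER :=
  if Rlt_dec c c_e then
    let r42 := / 2 * (1 - (c + 1) / (2 * sqrt (mu * (1 - mu)))) in
    ER_mul (2 / PI * sqrt (4 * r42 - 2)) (K (sqrt r42))
  else Fin 0.

(* hyperbolic orbit: infinite eta-period *)
Definition R_hyp (mu c : R) : ER := PInf.

Definition R_ell (mu c : R) : ER :=
  let r42 := / 2 * (1 + (c ^ 2 - 1) /
               sqrt (c ^ 4 + 2 * c ^ 2 + 1 - 4 * (1 - 2 * mu) ^ 2 * c ^ 2)) in
  ER_mul (2 / PI * sqrt (1 - 2 * r42)) (K (sqrt r42)).

(* Each rotation function is an explicit algebraic factor times
   [F m = (2/pi) K(sqrt m) = sum_n a_n m^n] ([Kser], [a_n = K_coef n]), evaluated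
   at a modulus that is an explicit monotone function of the energy.
   Monotonicity then reduces to [F] increasing, together with the one nontrivial
   fact that [sqrt(1 - 2m) F(m)] decreases on [0, 1/2): this is
   [F - (1 - 2m) F' > 0], which holds coefficientwise since
   [(2n + 1) a_n >= (n + 1) a_(n+1)].  The limits follow from
   [1 <= F m <= 1 / (1 - m)] and from [F m -> oo] as [m -> 1], a consequence of
   [a_n >= 1 / (4n)] and the divergence of the harmonic series. *)

From Stdlib Require Import Reals Lra Lia Psatz ClassicalEpsilon.
From Coquelicot Require Import Coquelicot.
Open Scope R_scope.

Lemma Rdiv_lt_cross a b c e : 0 < b -> 0 < e -> a * e < c * b -> a / b < c / e.
Proof.
  intros Hb He H; apply Rmult_lt_reg_r with (b * e); [nra|].
  replace (a / b * (b * e)) with (a * e) by (field; lra).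
  replace (c / e * (b * e)) with (c * b) by (field; lra); exact H.
Qed.

Lemma Rdiv_le_cross a b c e : 0 < b -> 0 < e -> a * e <= c * b -> a / b <= c / e.
Proof.
  intros Hb He H; apply Rmult_le_reg_r with (b * e); [nra|].
  replace (a / b * (b * e)) with (a * e) by (field; lra).
  replace (c / e * (b * e)) with (c * b) by (field; lra); exact H.
Qed.

Lemma sqrt_ge_1 x : 1 <= x -> 1 <= sqrt x.
Proof. intros Hx; pose proof (sqrt_le_1_alt 1 x Hx); rewrite sqrt_1 in *; assumption. Qed.

Lemma Un_cv_const c : Un_cv (fun _ => c) c.
Proof. intros eps Heps; exists 0%nat; intros; unfold Rdist; rewrite Rminus_diag, Rabs_R0; lra. Qed.

(** * The series of K *)

Lemma dfact_pos n : (0 < dfact n)%nat.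
Proof.
  induction n as [n IH] using (well_founded_induction Wf_nat.lt_wf).
  destruct n as [|[|n]]; simpl; try lia.
  specialize (IH n ltac:(lia)); nia.
Qed.

Lemma dfact_even_succ n : dfact (2 * S n) = ((2 * n + 2) * dfact (2 * n))%nat.
Proof. replace (2 * S n)%nat with (S (S (2 * n))) by lia; cbn [dfact]; f_equal; lia. Qed.

Lemma dfact_odd_succ n : dfact (2 * S n - 1) = ((2 * n + 1) * dfact (2 * n - 1))%nat.
Proof.
  destruct n as [|n]; [reflexivity|].
  replace (2 * S (S n) - 1)%nat with (S (S (2 * n + 1))) by lia.
  replace (2 * S n - 1)%nat with (2 * n + 1)%nat by lia.
  cbn [dfact]; f_equal; lia.
Qed.

Lemma K_coef_0 : K_coef 0 = 1.
Proof. unfold K_coef; simpl; lra. Qed.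

Lemma K_coef_succ n :
  K_coef (S n) = K_coef n * ((2 * INR n + 1) / (2 * INR n + 2)) ^ 2.
Proof.
  unfold K_coef; rewrite dfact_odd_succ, dfact_even_succ, !mult_INR, !plus_INR, !mult_INR.
  replace (INR 2) with 2 by (simpl; lra); replace (INR 1) with 1 by (simpl; lra).
  pose proof (lt_0_INR _ (dfact_pos (2 * n))).
  pose proof (lt_0_INR _ (dfact_pos (2 * n - 1))).
  pose proof (pos_INR n).
  field; lra.
Qed.

Lemma K_coef_1 : K_coef 1 = / 4.
Proof. rewrite K_coef_succ, K_coef_0; simpl; lra. Qed.

Lemma K_coef_pos n : 0 < K_coef n.
Proof.
  induction n as [|n IH]; [rewrite K_coef_0; lra|].
  rewrite K_coef_succ; pose proof (pos_INR n).
  apply Rmult_lt_0_compat; [exact IH|apply pow_lt, Rdiv_lt_0_compat; lra].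
Qed.

Lemma K_coef_le_1 n : K_coef n <= 1.
Proof.
  induction n as [|n IH]; [rewrite K_coef_0; lra|].
  rewrite K_coef_succ; pose proof (pos_INR n); pose proof (K_coef_pos n).
  set (q := (2 * INR n + 1) / (2 * INR n + 2)).
  assert (0 <= q <= 1) by (unfold q; split;
    [apply Rlt_le, Rdiv_lt_0_compat|apply Rcomplements.Rle_div_l]; lra).
  simpl; nra.
Qed.

Lemma K_coef_ge_inv n : / (4 * INR (S n)) <= K_coef (S n).
Proof.
  induction n as [|n IH]; [rewrite K_coef_1; simpl; lra|].
  rewrite K_coef_succ, !S_INR; rewrite S_INR in IH.
  pose proof (pos_INR n); set (x := INR n) in *.
  apply Rle_trans with (/ (4 * (x + 1)) * ((2 * (x + 1) + 1) / (2 * (x + 1) + 2)) ^ 2).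
  - replace (/ (4 * (x + 1)) * ((2 * (x + 1) + 1) / (2 * (x + 1) + 2)) ^ 2)
      with ((2 * x + 3) ^ 2 / (16 * (x + 1) * (x + 2) ^ 2)) by (field; lra).
    apply Rcomplements.Rle_div_r; [nra|].
    rewrite Rmult_comm, <- Rdiv_def; apply Rcomplements.Rle_div_l; nra.
  - apply Rmult_le_compat_r; [apply pow2_ge_0|exact IH].
Qed.

Lemma K_coef_succ_ratio n :
  INR (S (S n)) * K_coef (S (S n)) <= (2 * INR (S n) + 1) * K_coef (S n).
Proof.
  rewrite (K_coef_succ (S n)), !S_INR; pose proof (K_coef_pos (S n)).
  pose proof (pos_INR n); set (x := INR n) in *; set (k := K_coef (S n)) in *.
  replace ((x + 1 + 1) * (k * ((2 * (x + 1) + 1) / (2 * (x + 1) + 2)) ^ 2))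
    with (k * ((2 * x + 3) ^ 2 / (4 * (x + 2)))) by (field; lra).
  replace ((2 * (x + 1) + 1) * k) with (k * (2 * x + 3)) by ring.
  apply Rmult_le_compat_l; [lra|apply Rcomplements.Rle_div_l; nra].
Qed.

Definition Kser (m : R) : R := PSeries K_coef m.
Definition K_partial (m : R) (N : nat) : R := sum_f_R0 (fun n => K_coef n * m ^ n) N.

Lemma CV_radius_K_coef x : Rabs x < 1 -> Rbar_lt (Rabs x) (CV_radius K_coef).
Proof.
  intros Hx; apply Rbar_lt_le_trans with 1; [exact Hx|].
  apply (proj1 (CV_radius_bounded K_coef)); exists 1; intros n.
  rewrite pow1, Rmult_1_r, Rabs_pos_eq by apply Rlt_le, K_coef_pos.
  apply K_coef_le_1.
Qed.

Lemma Un_cv_PSeries a x : Rbar_lt (Rabs x) (CV_radius a) ->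
  Un_cv (fun N => sum_f_R0 (fun n => a n * x ^ n) N) (PSeries a x).
Proof.
  intros Hx; apply is_pseries_Reals, PSeries_correct, CV_radius_inside, Hx.
Qed.

Lemma K_partial_cv m : Rabs m < 1 -> Un_cv (K_partial m) (Kser m).
Proof. intros Hm; apply Un_cv_PSeries, CV_radius_K_coef, Hm. Qed.

Lemma seq_lim_spec u l : Un_cv u l -> seq_lim u = l.
Proof.
  intros Hl; unfold seq_lim; destruct excluded_middle_informative as [Hex|Hnex].
  - destruct (constructive_indefinite_description _ Hex) as [l' Hl']; simpl.
    exact (UL_sequence _ _ _ Hl' Hl).
  - exfalso; apply Hnex; exists l; exact Hl.
Qed.

Lemma K_sqrt m : 0 <= m < 1 -> K (sqrt m) = Fin (PI / 2 * Kser m).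
Proof.
  intros Hm; unfold K; rewrite pow2_sqrt by lra.
  destruct (Rlt_dec m 1) as [_|]; [|lra]; do 2 f_equal.
  apply seq_lim_spec, Un_cv_ext with (K_partial m);
    [|apply K_partial_cv; rewrite Rabs_pos_eq; lra].
  intros N; apply sum_eq; intros n _; rewrite pow_mult, pow2_sqrt by lra; reflexivity.
Qed.

Lemma K_sqrt_1 : K (sqrt 1) = PInf.
Proof. unfold K; rewrite sqrt_1; destruct Rlt_dec as [H|]; [simpl in H; lra|reflexivity]. Qed.

Section KserBounds.

Variable m : R.
Hypothesis Hm : 0 <= m < 1.

Let K_partial_cv_m : Un_cv (K_partial m) (Kser m).
Proof. apply K_partial_cv; rewrite Rabs_pos_eq; lra. Qed.

Lemma K_partial_le_Kser N : K_partial m N <= Kser m.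
Proof.
  apply (growing_ineq _ _ ); [|exact K_partial_cv_m].
  intros n; unfold K_partial; cbn [sum_f_R0]; pose proof (K_coef_pos (S n)).
  pose proof (pow_le m (S n) (proj1 Hm)); nra.
Qed.

Lemma Kser_ge_1 : 1 <= Kser m.
Proof.
  pose proof (K_partial_le_Kser 0); unfold K_partial in *; simpl in *.
  rewrite K_coef_0 in *; lra.
Qed.

Lemma Kser_le_inv : Kser m <= / (1 - m).
Proof.
  apply Rle_cv_lim with (Vn := fun _ => / (1 - m)) (2 := K_partial_cv_m); [intros N|].
  2: apply Un_cv_const.
  apply Rle_trans with (sum_f_R0 (fun n => m ^ n) N).
  - apply sum_Rle; intros n _; pose proof (K_coef_le_1 n).
    pose proof (pow_le m n (proj1 Hm)); nra.
  - rewrite tech3 by lra; pose proof (pow_le m (S N) (proj1 Hm)).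
    apply Rcomplements.Rle_div_l; [|rewrite Rinv_l]; lra.
Qed.

End KserBounds.

Lemma Kser_0 : Kser 0 = 1.
Proof. unfold Kser; rewrite PSeries_0; exact K_coef_0. Qed.

Lemma Kser_le_1_2m m : 0 <= m <= 1/2 -> Kser m <= 1 + 2 * m.
Proof.
  intros Hm; apply Rle_trans with (/ (1 - m)); [apply Kser_le_inv; lra|].
  rewrite <- Rdiv_1_l; apply Rcomplements.Rle_div_l; nra.
Qed.

Lemma Kser_increment m1 m2 : 0 <= m1 <= m2 -> m2 < 1 ->
  Kser m1 + (m2 - m1) / 4 <= Kser m2.
Proof.
  intros H12 H2.
  assert (Hdiff : Un_cv (fun N => K_partial m2 N - K_partial m1 N) (Kser m2 - Kser m1))
    by (apply CV_minus; apply K_partial_cv; rewrite Rabs_pos_eq; lra).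
  enough ((m2 - m1) / 4 <= Kser m2 - Kser m1) by lra.
  replace ((m2 - m1) / 4) with (K_partial m2 1 - K_partial m1 1)
    by (unfold K_partial; simpl; rewrite K_coef_0, K_coef_1; lra).
  apply (growing_ineq (fun N => K_partial m2 N - K_partial m1 N)); [|exact Hdiff].
  intros n; unfold K_partial; cbn [sum_f_R0]; pose proof (K_coef_pos (S n)).
  pose proof (pow_incr m1 m2 (S n) H12); nra.
Qed.

Lemma Kser_lt m1 m2 : 0 <= m1 -> m1 < m2 -> m2 < 1 -> Kser m1 < Kser m2.
Proof. intros; pose proof (Kser_increment m1 m2); lra. Qed.

Lemma Kser_le m1 m2 : 0 <= m1 -> m1 <= m2 -> m2 < 1 -> Kser m1 <= Kser m2.
Proof. intros; pose proof (Kser_increment m1 m2); lra. Qed.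

Lemma K_partial_1_block N k : (1 <= N)%nat ->
  K_partial 1 N + INR k / (4 * INR (N + k)) <= K_partial 1 (N + k).
Proof.
  intros HN; pose proof (le_INR 1 N HN) as HN'; simpl in HN'.
  induction k as [|k IH].
  - rewrite Nat.add_0_r; simpl; unfold Rdiv; lra.
  - rewrite Nat.add_succ_r; unfold K_partial at 2; cbn [sum_f_R0]; fold (K_partial 1 (N + k)).
    pose proof (K_coef_ge_inv (N + k)); rewrite pow1.
    rewrite !S_INR, !plus_INR in *; pose proof (pos_INR k).
    apply Rle_trans with (K_partial 1 N + INR k / (4 * (INR N + INR k))
      + / (4 * (INR N + INR k + 1))); [|lra].
    enough (INR k / (4 * (INR N + INR k + 1)) <= INR k / (4 * (INR N + INR k))).
    { replace ((INR k + 1) / (4 * (INR N + INR k + 1))) with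
        (INR k / (4 * (INR N + INR k + 1)) + / (4 * (INR N + INR k + 1))) by (field; lra).
      lra. }
    apply Rmult_le_compat_l; [lra|apply Rinv_le_contravar; lra].
Qed.

Lemma K_partial_1_dyadic j : 1 + INR j / 8 <= K_partial 1 (2 ^ j).
Proof.
  induction j as [|j IH].
  - unfold K_partial; simpl; rewrite K_coef_0, K_coef_1; lra.
  - assert (Hj : (1 <= 2 ^ j)%nat) by (apply (Nat.pow_le_mono_r 2 0 j); lia).
    replace (2 ^ S j)%nat with (2 ^ j + 2 ^ j)%nat by (simpl; lia).
    pose proof (K_partial_1_block _ (2 ^ j) Hj); pose proof (le_INR 1 _ Hj).
    rewrite plus_INR, S_INR in *; simpl in *.
    replace (INR (2 ^ j) / (4 * (INR (2 ^ j) + INR (2 ^ j)))) with (/ 8) in * by (field; lra).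
    lra.
Qed.

Lemma K_partial_pow_le m N : 0 <= m <= 1 -> m ^ N * K_partial 1 N <= K_partial m N.
Proof.
  intros Hm; induction N as [|N IH]; [unfold K_partial; simpl; lra|].
  unfold K_partial in *; cbn [sum_f_R0]; rewrite pow1.
  assert (0 <= sum_f_R0 (fun n => K_coef n * 1 ^ n) N).
  { apply cond_pos_sum; intros n; rewrite pow1, Rmult_1_r; apply Rlt_le, K_coef_pos. }
  pose proof (pow_le m N (proj1 Hm)); pose proof (K_coef_pos (S N)).
  assert (m ^ S N <= m ^ N) by (simpl; nra).
  pose proof (pow_le m (S N) (proj1 Hm)); nra.
Qed.

Lemma pow_ge_bernoulli m N : 0 <= m <= 1 -> 1 - INR N * (1 - m) <= m ^ N.
Proof.
  intros Hm; induction N as [|N IH]; [simpl; lra|].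
  rewrite S_INR; simpl pow; pose proof (pos_INR N).
  pose proof (Rmult_le_compat_l m _ _ (proj1 Hm) IH).
  assert (0 <= INR N * ((1 - m) * (1 - m))) by (apply Rmult_le_pos; nra); nra.
Qed.

Lemma Kser_unbounded M : exists d, 0 < d /\ forall m, 1 - d < m < 1 -> M < Kser m.
Proof.
  destruct (INR_archimed (/ 16) M) as [j Hj]; [lra|].
  set (N := (2 ^ j)%nat).
  assert (HN : 1 <= INR N) by (apply (le_INR 1); unfold N;
    apply (Nat.pow_le_mono_r 2 0 j); lia).
  exists (/ (2 * INR N)); split; [apply Rinv_0_lt_compat; lra|].
  intros m Hm; assert (/ (2 * INR N) <= / 2) by (apply Rinv_le_contravar; lra).
  assert (Hhalf : INR N * (1 - m) < / 2).
  { replace (/ 2) with (INR N * / (2 * INR N)) by (field; lra).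
    apply Rmult_lt_compat_l; lra. }
  pose proof (pow_ge_bernoulli m N ltac:(lra)).
  pose proof (K_partial_pow_le m N ltac:(lra)).
  pose proof (K_partial_le_Kser m ltac:(lra) N).
  pose proof (K_partial_1_dyadic j) as Hdy; change (2 ^ j)%nat with N in Hdy.
  pose proof (pos_INR j).
  assert (/ 2 * (1 + INR j / 8) <= m ^ N * K_partial 1 N)
    by (apply Rmult_le_compat; lra).
  lra.
Qed.

Definition Kser_deriv (x : R) : R := PSeries (PS_derive K_coef) x.

Lemma Kser_derivable x : Rabs x < 1 -> derivable_pt_lim Kser x (Kser_deriv x).
Proof. intros Hx; apply is_derive_Reals, is_derive_PSeries, CV_radius_K_coef, Hx. Qed.

(* The x^n-coefficient of [F - (1 - 2x) F'] is [(2n + 1) a_n - (n + 1) a_(n+1)],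
   which is nonnegative and equals 3/4 for n = 0.  The last term is the part of
   [2x F'] that belongs to the coefficient of x^(N+1). *)
Lemma K_partial_sub_deriv_ge x N : 0 <= x ->
  3 / 4 <= K_partial x N - (1 - 2 * x) * sum_f_R0 (fun n => PS_derive K_coef n * x ^ n) N
           - 2 * (INR (S N) * K_coef (S N)) * x ^ S N.
Proof.
  intros Hx; induction N as [|N IH].
  - unfold K_partial, PS_derive; simpl; rewrite K_coef_0, K_coef_1; lra.
  - unfold K_partial in *; cbn [sum_f_R0]; unfold PS_derive in *.
    pose proof (K_coef_succ_ratio N); pose proof (pow_le x (S N) Hx).
    replace (x ^ S (S N)) with (x * x ^ S N) by reflexivity.
    nra.
Qed.

Lemma Kser_sub_deriv_ge x : 0 <= x < 1 -> 3 / 4 <= Kser x - (1 - 2 * x) * Kser_deriv x.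
Proof.
  intros Hx; assert (Hx' : Rabs x < 1) by (rewrite Rabs_pos_eq; lra).
  apply Rle_cv_lim with (Un := fun _ => 3 / 4)
    (Vn := fun N => K_partial x N - (1 - 2 * x) *
             sum_f_R0 (fun n => PS_derive K_coef n * x ^ n) N).
  - intros N; pose proof (K_partial_sub_deriv_ge x N (proj1 Hx)).
    pose proof (K_coef_pos (S N)); pose proof (pos_INR (S N)).
    pose proof (pow_le x (S N) (proj1 Hx)).
    assert (0 <= INR (S N) * K_coef (S N) * x ^ S N)
      by (apply Rmult_le_pos; [apply Rmult_le_pos|]; lra).
    lra.
  - apply Un_cv_const.
  - apply CV_minus; [apply K_partial_cv, Hx'|apply CV_mult; [apply Un_cv_const|]].
    apply Un_cv_PSeries; rewrite CV_radius_derive; apply CV_radius_K_coef, Hx'.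
Qed.

(* The derivative of (1 - 2m) F(m)^2 is -2 F (F - (1 - 2m) F') < 0. *)
Lemma sqrt_Kser_lt m1 m2 : 0 <= m1 -> m1 < m2 -> m2 < 1 / 2 ->
  sqrt (1 - 2 * m2) * Kser m2 < sqrt (1 - 2 * m1) * Kser m1.
Proof.
  intros H1 H12 H2.
  set (h := fun m => (1 - 2 * m) * (Kser m * Kser m)).
  set (dh := fun m => -2 * (Kser m * Kser m)
                      + (1 - 2 * m) * (Kser_deriv m * Kser m + Kser m * Kser_deriv m)).
  assert (Hh : h m2 < h m1).
  { destruct (MVT_cor2 h dh m1 m2 H12) as [c [Hc Hcm]].
    - intros c Hc; assert (HF : derivable_pt_lim Kser c (Kser_deriv c))
        by (apply Kser_derivable; rewrite Rabs_pos_eq; lra).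
      apply (derivable_pt_lim_mult (fun m => 1 - 2 * m) (fun m => Kser m * Kser m));
        [|exact (derivable_pt_lim_mult _ _ _ _ _ HF HF)].
      replace (-2) with (0 - 2 * 1) by ring.
      apply (derivable_pt_lim_minus (fun _ => 1) (fun m => 2 * m));
        [apply derivable_pt_lim_const|apply derivable_pt_lim_scal, derivable_pt_lim_id].
    - pose proof (Kser_sub_deriv_ge c ltac:(lra)); pose proof (Kser_ge_1 c ltac:(lra)).
      assert (dh c < 0) by (unfold dh; nra).
      nra. }
  assert (Hsq : forall m, 0 <= m < 1 / 2 -> sqrt (1 - 2 * m) * Kser m = sqrt (h m)).
  { intros m Hm; pose proof (Kser_ge_1 m ltac:(lra)); unfold h.
    rewrite sqrt_mult, sqrt_square by nra; reflexivity. }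
  rewrite !Hsq by lra; pose proof (Kser_ge_1 m2 ltac:(lra)).
  apply sqrt_lt_1; unfold h in *; nra.
Qed.

(** * Moduli and rotation functions *)

(* [G w = (2/pi) sqrt(1 - 2k^2) K(k)] in the variable [w = 1 - 2k^2]; the
   exterior rotation numbers are [1 / G] and the elliptic one is [G], each
   composed with an explicit change of variable. *)
Definition G (w : R) : R := sqrt w * Kser ((1 - w) / 2).

Section GBounds.

Variable w : R.
Hypothesis Hw : 0 < w <= 1.

Let Kser_bounds : 1 <= Kser ((1 - w) / 2) <= 2 - w.
Proof.
  split; [apply Kser_ge_1; lra|].
  pose proof (Kser_le_1_2m ((1 - w) / 2)); lra.
Qed.

Let sqrt_bounds : w <= sqrt w <= 1.
Proof.
  pose proof (sqrt_sqrt w ltac:(lra)); pose proof (sqrt_pos w).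
  assert (sqrt w <= 1) by (rewrite <- sqrt_1; apply sqrt_le_1_alt; lra).
  split; nra.
Qed.

Lemma G_ge : w <= G w.
Proof. unfold G; nra. Qed.

Lemma G_pos : 0 < G w.
Proof. pose proof G_ge; lra. Qed.

Lemma G_near_1 : Rabs (G w - 1) <= 1 - w.
Proof. apply Rabs_le; unfold G; split; nra. Qed.

Lemma G_le_sqrt : G w <= 2 * sqrt w.
Proof. unfold G; pose proof (sqrt_pos w); nra. Qed.

End GBounds.

Lemma G_lt w1 w2 : 0 < w1 -> w1 < w2 -> w2 <= 1 -> G w1 < G w2.
Proof.
  intros H1 H12 H2; unfold G.
  pose proof (sqrt_Kser_lt ((1 - w2) / 2) ((1 - w1) / 2) ltac:(lra) ltac:(lra) ltac:(lra)).
  replace (1 - 2 * ((1 - w1) / 2)) with w1 in * by field.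
  replace (1 - 2 * ((1 - w2) / 2)) with w2 in * by field.
  exact H.
Qed.

Lemma inv_G_near_1 w : 1 / 2 <= w <= 1 -> Rabs (/ G w - 1) <= 2 * (1 - w).
Proof.
  intros Hw; pose proof (G_near_1 w ltac:(lra)); pose proof (G_ge w ltac:(lra)).
  replace (/ G w - 1) with ((1 - G w) / G w) by (field; lra).
  rewrite Rabs_div, (Rabs_pos_eq (G w)), Rabs_minus_sym by lra.
  apply Rcomplements.Rle_div_l; [lra|nra].
Qed.

Lemma inv_G_unbounded M : exists t, 0 < t /\ forall w, 0 < w < t -> M < / G w.
Proof.
  set (e := / (2 * (Rabs M + 1))); pose proof (Rabs_pos M); pose proof (Rle_abs M).
  assert (He : 0 < e) by (apply Rinv_0_lt_compat; lra).
  exists (Rmin 1 (e * e)); split; [apply Rmin_glb_lt; nra|].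
  intros w Hw; pose proof (Rmin_l 1 (e * e)); pose proof (Rmin_r 1 (e * e)).
  pose proof (G_le_sqrt w ltac:(lra)); pose proof (G_pos w ltac:(lra)).
  assert (sqrt w < e) by (rewrite <- (sqrt_square e) by lra; apply sqrt_lt_1; nra).
  assert (Hinv : / (2 * e) < / G w) by (apply Rinv_lt_contravar; nra).
  replace (/ (2 * e)) with (Rabs M + 1) in Hinv by (unfold e; field; lra).
  lra.
Qed.

Lemma G_small eps : 0 < eps -> exists t, 0 < t /\ forall w, 0 < w < t -> Rabs (G w) < eps.
Proof.
  intros Heps; exists (Rmin 1 (eps * eps / 4)); split.
  { apply Rmin_glb_lt; [lra|apply Rdiv_lt_0_compat; nra]. }
  intros w Hw; pose proof (Rmin_l 1 (eps * eps / 4)); pose proof (Rmin_r 1 (eps * eps / 4)).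
  pose proof (G_le_sqrt w ltac:(lra)); rewrite Rabs_pos_eq by (apply Rlt_le, G_pos; lra).
  assert (sqrt w < eps / 2) by (rewrite <- (sqrt_square (eps / 2)) by lra; apply sqrt_lt_1; nra).
  lra.
Qed.

(* Parts (a)-(c): the rotation function depends on the energy [c] only through
   its distance [a - c] to a critical energy [a]. *)
Section Shift.

Variables (f : R -> ER) (g : R -> R) (a : R).
Hypothesis f_eq : forall c, c < a -> f c = Fin (g (a - c)).

Lemma strictly_increasing_shift (P : R -> Prop) :
  (forall c, P c -> c < a) ->
  (forall d1 d2, 0 < d1 -> d1 < d2 -> g d2 < g d1) ->
  strictly_increasing_on P f.
Proof.
  intros HP Hg x y Hx Hy Hxy; pose proof (HP _ Hx); pose proof (HP _ Hy).
  rewrite !f_eq by lra; apply Hg; lra.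
Qed.

Lemma lim_minfty_shift L :
  (forall eps, 0 < eps -> exists D, forall d, D < d -> Rabs (g d - L) < eps) ->
  lim_minfty_fin f L.
Proof.
  intros Hg eps Heps; destruct (Hg eps Heps) as [D HD].
  exists (Rmin a (a - D)); intros c Hc.
  pose proof (Rmin_l a (a - D)); pose proof (Rmin_r a (a - D)).
  rewrite f_eq by lra; apply HD; lra.
Qed.

Lemma lim_left_inf_shift :
  (forall M, exists t, 0 < t /\ forall d, 0 < d < t -> M < g d) ->
  lim_left_inf f a.
Proof.
  intros Hg M; destruct (Hg M) as [t [Ht HM]]; exists t; split; [exact Ht|].
  intros c Hc; rewrite f_eq by lra; apply HM; lra.
Qed.

End Shift.

Definition Kint (m : R) : R := sqrt (1 + m) * Kser m.

Lemma Kint_lt m1 m2 : 0 <= m1 -> m1 < m2 -> m2 < 1 -> Kint m1 < Kint m2.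
Proof.
  intros H1 H12 H2; unfold Kint.
  pose proof (sqrt_le_1_alt (1 + m1) (1 + m2) ltac:(lra)).
  pose proof (Kser_lt m1 m2 H1 H12 H2); pose proof (Kser_ge_1 m1 ltac:(lra)).
  assert (1 <= sqrt (1 + m1)) by (apply sqrt_ge_1; lra).
  nra.
Qed.

Lemma Kser_le_Kint m : 0 <= m < 1 -> Kser m <= Kint m.
Proof.
  intros Hm; unfold Kint; pose proof (Kser_ge_1 m Hm).
  assert (1 <= sqrt (1 + m)) by (apply sqrt_ge_1; lra).
  nra.
Qed.

Lemma Kint_near_0 m : 0 <= m <= 1 / 2 -> Rabs (Kint m - 1) <= 4 * m.
Proof.
  intros Hm; unfold Kint.
  assert (1 <= sqrt (1 + m)) by (apply sqrt_ge_1; lra).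
  assert (sqrt (1 + m) <= 1 + m) by (pose proof (sqrt_sqrt (1 + m) ltac:(lra)); nra).
  pose proof (Kser_ge_1 m ltac:(lra)); pose proof (Kser_le_1_2m m Hm).
  apply Rabs_le; split; nra.
Qed.

Definition int_modulus (s x : R) : R :=
  (x - sqrt (x * x - 4 * (s * s))) / (x + sqrt (x * x - 4 * (s * s))).

Section InteriorModulus.

Variable s : R.
Hypothesis Hs : 0 < s <= 1 / 2.

Section Point.

Variable x : R.
Hypothesis Hx : 2 * s < x.

Let A := sqrt (x * x - 4 * (s * s)).

Let A_sqr : A * A = x * x - 4 * (s * s).
Proof. apply sqrt_sqrt; nra. Qed.

Let A_bounds : 0 <= A < x.
Proof. assert (0 <= A) by apply sqrt_pos; nra. Qed.

Lemma int_modulus_eq : int_modulus s x = 4 * (s * s) / ((x + A) * (x + A)).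
Proof.
  unfold int_modulus; fold A; replace (4 * (s * s)) with (x * x - A * A) by lra.
  field; lra.
Qed.

Lemma int_modulus_bounds : 0 < int_modulus s x < 1.
Proof.
  rewrite int_modulus_eq; split; [apply Rdiv_lt_0_compat; nra|].
  apply Rcomplements.Rlt_div_l; nra.
Qed.

Lemma int_modulus_le_inv : int_modulus s x <= / (x * x).
Proof.
  assert (4 * (s * s) <= 1) by nra; assert (x * x <= (x + A) * (x + A)) by nra.
  rewrite int_modulus_eq, <- Rdiv_1_l; apply Rdiv_le_cross; nra.
Qed.

Lemma one_sub_int_modulus_le : 1 - int_modulus s x <= A / s.
Proof.
  replace (1 - int_modulus s x) with (2 * A / (x + A))
    by (unfold int_modulus; fold A; field; lra).
  apply Rdiv_le_cross; nra.
Qed.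

End Point.

Lemma int_modulus_lt x1 x2 : 2 * s < x1 -> x1 < x2 -> int_modulus s x2 < int_modulus s x1.
Proof.
  intros H1 H12; rewrite !int_modulus_eq by lra.
  assert (sqrt (x1 * x1 - 4 * (s * s)) <= sqrt (x2 * x2 - 4 * (s * s)))
    by (apply sqrt_le_1_alt; nra).
  pose proof (sqrt_pos (x1 * x1 - 4 * (s * s))).
  set (u1 := x1 + sqrt (x1 * x1 - 4 * (s * s))) in *.
  set (u2 := x2 + sqrt (x2 * x2 - 4 * (s * s))) in *.
  assert (0 < u1 < u2) by (unfold u1, u2; lra).
  assert (u1 * u1 < u2 * u2) by nra; assert (0 < s * s) by nra.
  apply Rdiv_lt_cross; nra.
Qed.

End InteriorModulus.

Definition int_rot (s d : R) : R := Kint (int_modulus s (2 * s + d)).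

Section InteriorRotation.

Variable s : R.
Hypothesis Hs : 0 < s <= 1 / 2.

Lemma int_rot_lt d1 d2 : 0 < d1 -> d1 < d2 -> int_rot s d2 < int_rot s d1.
Proof.
  intros H1 H12; unfold int_rot.
  pose proof (int_modulus_bounds s Hs (2 * s + d2) ltac:(lra)).
  pose proof (int_modulus_bounds s Hs (2 * s + d1) ltac:(lra)).
  apply Kint_lt; [lra|apply int_modulus_lt|]; lra.
Qed.

Lemma int_rot_cv_pinfty eps : 0 < eps ->
  exists D, forall d, D < d -> Rabs (int_rot s d - 1) < eps.
Proof.
  intros Heps; exists (2 + 4 / eps); intros d Hd; unfold int_rot.
  assert (0 < 4 / eps) by (apply Rdiv_lt_0_compat; lra).
  set (x := 2 * s + d); assert (Hx : 4 / eps < x /\ 2 < x) by (unfold x; lra).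
  destruct Hx as [Hx Hx2]; apply Rcomplements.Rlt_div_l in Hx; [|lra].
  pose proof (int_modulus_bounds s Hs x ltac:(lra)).
  pose proof (int_modulus_le_inv s Hs x ltac:(lra)).
  assert (Hinv : / (x * x) <= / (2 * x)) by (apply Rinv_le_contravar; nra).
  assert (4 * / (2 * x) < eps).
  { replace (4 * / (2 * x)) with (2 / x) by (field; lra).
    apply Rcomplements.Rlt_div_l; lra. }
  assert (/ (2 * x) <= / 4) by (apply Rinv_le_contravar; lra).
  pose proof (Kint_near_0 (int_modulus s x) ltac:(lra)); lra.
Qed.

Lemma int_rot_unbounded M : exists t, 0 < t /\ forall d, 0 < d < t -> M < int_rot s d.
Proof.
  destruct (Kser_unbounded M) as [e [He HM]].
  assert (Hse : 0 < s * e) by nra.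
  exists (Rmin 1 ((s * e) * (s * e) / 3)); split.
  { apply Rmin_glb_lt; [lra|apply Rdiv_lt_0_compat; nra]. }
  intros d Hd; pose proof (Rmin_l 1 ((s * e) * (s * e) / 3));
    pose proof (Rmin_r 1 ((s * e) * (s * e) / 3)).
  set (x := 2 * s + d); unfold int_rot; fold x.
  pose proof (int_modulus_bounds s Hs x ltac:(unfold x; lra)).
  pose proof (one_sub_int_modulus_le s Hs x ltac:(unfold x; lra)).
  set (A := sqrt (x * x - 4 * (s * s))) in *.
  assert (HA : A * A < (s * e) * (s * e)).
  { unfold A; rewrite sqrt_sqrt by (unfold x; nra).
    replace (x * x - 4 * (s * s)) with (d * (4 * s + d)) by (unfold x; ring); nra. }
  assert (A < s * e) by (assert (0 <= A) by apply sqrt_pos; nra).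
  assert (A / s < e) by (apply Rcomplements.Rlt_div_l; lra).
  pose proof (HM (int_modulus s x) ltac:(lra)).
  pose proof (Kser_le_Kint (int_modulus s x) ltac:(lra)).
  lra.
Qed.

End InteriorRotation.

Definition ext_modulus (s d : R) : R := d / sqrt (d * d + 4 * (s * s)).

Section ExteriorModulus.

Variable s : R.
Hypothesis Hs : 0 < s <= 1 / 2.

Lemma ext_modulus_bounds d : 0 < d ->
  0 < ext_modulus s d < 1 /\ ext_modulus s d <= d / (2 * s).
Proof.
  intros Hd; unfold ext_modulus; set (S := sqrt (d * d + 4 * (s * s))).
  assert (HS2 : S * S = d * d + 4 * (s * s)) by (apply sqrt_sqrt; nra).
  assert (HS : 2 * s <= S) by (rewrite <- (sqrt_square (2 * s)) by lra; apply sqrt_le_1_alt; nra).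
  repeat split.
  - apply Rdiv_lt_0_compat; lra.
  - apply Rcomplements.Rlt_div_l; nra.
  - apply Rmult_le_compat_l; [lra|apply Rinv_le_contravar; lra].
Qed.

Lemma ext_modulus_sqr d : 0 < d ->
  ext_modulus s d * ext_modulus s d = d * d / (d * d + 4 * (s * s)).
Proof.
  intros Hd; unfold ext_modulus.
  set (S := sqrt (d * d + 4 * (s * s))).
  assert (HS : 0 < S) by (apply sqrt_lt_R0; nra).
  rewrite <- (sqrt_sqrt (d * d + 4 * (s * s))) by nra; fold S; field; lra.
Qed.

Lemma ext_modulus_lt d1 d2 : 0 < d1 -> d1 < d2 -> ext_modulus s d1 < ext_modulus s d2.
Proof.
  intros H1 H12; destruct (ext_modulus_bounds d1 H1) as [[A1 _] _].
  destruct (ext_modulus_bounds d2 ltac:(lra)) as [[A2 _] _].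
  enough (ext_modulus s d1 * ext_modulus s d1 < ext_modulus s d2 * ext_modulus s d2) by nra.
  assert (d1 * d1 < d2 * d2) by nra; assert (0 < s * s) by nra.
  rewrite !ext_modulus_sqr by lra; apply Rdiv_lt_cross; nra.
Qed.

Lemma ext_modulus_near_1 d : 1 <= d -> 1 - ext_modulus s d <= / d /\ 1 / 2 <= ext_modulus s d.
Proof.
  intros Hd; destruct (ext_modulus_bounds d ltac:(lra)) as [[A1 B1] _].
  pose proof (ext_modulus_sqr d ltac:(lra)) as Hsq.
  assert (H4 : 1 - ext_modulus s d * ext_modulus s d <= / (d * d + 1)).
  { rewrite Hsq; replace (1 - d * d / (d * d + 4 * (s * s)))
      with (4 * (s * s) / (d * d + 4 * (s * s))) by (field; nra).
    assert (4 * (s * s) <= 1) by nra.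
    rewrite <- Rdiv_1_l; apply Rdiv_le_cross; nra. }
  assert (/ (d * d + 1) <= / d) by (apply Rinv_le_contravar; nra).
  assert (/ (d * d + 1) <= / 2) by (apply Rinv_le_contravar; nra).
  split; nra.
Qed.

End ExteriorModulus.

Definition ext_rot (s d : R) : R := / G (ext_modulus s d).

Section ExteriorRotation.

Variable s : R.
Hypothesis Hs : 0 < s <= 1 / 2.

Lemma ext_rot_lt d1 d2 : 0 < d1 -> d1 < d2 -> ext_rot s d2 < ext_rot s d1.
Proof.
  intros H1 H12; unfold ext_rot.
  destruct (ext_modulus_bounds s Hs d1 H1) as [[A1 _] _].
  destruct (ext_modulus_bounds s Hs d2 ltac:(lra)) as [[A2 B2] _].
  pose proof (ext_modulus_lt s Hs d1 d2 H1 H12).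
  apply Rinv_lt_contravar; [apply Rmult_lt_0_compat; apply G_pos; lra|].
  apply G_lt; lra.
Qed.

Lemma ext_rot_cv_pinfty eps : 0 < eps ->
  exists D, forall d, D < d -> Rabs (ext_rot s d - 1) < eps.
Proof.
  intros Heps; exists (1 + 2 / eps); intros d Hd.
  assert (0 < 2 / eps) by (apply Rdiv_lt_0_compat; lra).
  destruct (ext_modulus_near_1 s Hs d ltac:(lra)) as [H1 H2].
  destruct (ext_modulus_bounds s Hs d ltac:(lra)) as [[_ B] _].
  eapply Rle_lt_trans; [apply inv_G_near_1; lra|].
  enough (2 * / d < eps) by lra.
  replace eps with (2 / (2 / eps)) by (field; lra).
  apply Rmult_lt_compat_l; [lra|apply Rinv_lt_contravar; nra].
Qed.

Lemma ext_rot_unbounded M : exists t, 0 < t /\ forall d, 0 < d < t -> M < ext_rot s d.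
Proof.
  destruct (inv_G_unbounded M) as [t [Ht HM]].
  exists (2 * s * t); split; [nra|]; intros d Hd.
  destruct (ext_modulus_bounds s Hs d ltac:(lra)) as [[A _] B].
  apply HM; split; [exact A|].
  apply Rle_lt_trans with (1 := B), Rcomplements.Rlt_div_l; nra.
Qed.

End ExteriorRotation.

Lemma ER_div_K_sqrt_G w : 0 < w <= 1 ->
  ER_div (Fin (PI / 2)) (ER_mul (sqrt w) (K (sqrt (/ 2 * (1 - w))))) = Fin (/ G w).
Proof.
  intros Hw; rewrite K_sqrt by lra; unfold G; simpl; f_equal.
  replace (/ 2 * (1 - w)) with ((1 - w) / 2) by field.
  pose proof PI_RGT_0; pose proof (sqrt_lt_R0 w ltac:(lra)).
  pose proof (Kser_ge_1 ((1 - w) / 2) ltac:(lra)); field; lra.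
Qed.

Definition Kdou (y : R) : R := sqrt (2 * y) * Kser ((1 + y) / 2).

Lemma Kdou_lt y1 y2 : 0 < y1 -> y1 < y2 -> y2 < 1 -> Kdou y1 < Kdou y2.
Proof.
  intros H1 H12 H2; unfold Kdou.
  pose proof (sqrt_lt_1 (2 * y1) (2 * y2) ltac:(lra) ltac:(lra) ltac:(lra)).
  pose proof (Kser_lt ((1 + y1) / 2) ((1 + y2) / 2) ltac:(lra) ltac:(lra) ltac:(lra)).
  pose proof (Kser_ge_1 ((1 + y1) / 2) ltac:(lra)); pose proof (sqrt_pos (2 * y1)); nra.
Qed.

Lemma Kdou_unbounded M : exists t, 0 < t /\ forall y, 1 - t < y < 1 -> M < Kdou y.
Proof.
  destruct (Kser_unbounded M) as [e [He HM]]; exists (Rmin (1 / 2) (2 * e)); split.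
  { apply Rmin_glb_lt; lra. }
  intros y Hy; pose proof (Rmin_l (1 / 2) (2 * e)); pose proof (Rmin_r (1 / 2) (2 * e)).
  unfold Kdou; assert (1 <= sqrt (2 * y)) by (apply sqrt_ge_1; lra).
  pose proof (HM ((1 + y) / 2) ltac:(lra)); pose proof (Kser_ge_1 ((1 + y) / 2) ltac:(lra)).
  nra.
Qed.

Lemma Kdou_small eps : 0 < eps -> exists t, 0 < t /\ forall y, 0 < y < t -> Rabs (Kdou y) < eps.
Proof.
  intros Heps; exists (Rmin (1 / 2) (eps * eps / 32)); split.
  { apply Rmin_glb_lt; [lra|apply Rdiv_lt_0_compat; nra]. }
  intros y Hy; pose proof (Rmin_l (1 / 2) (eps * eps / 32));
    pose proof (Rmin_r (1 / 2) (eps * eps / 32)); unfold Kdou.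
  pose proof (Kser_le ((1 + y) / 2) (3 / 4) ltac:(lra) ltac:(lra) ltac:(lra)).
  pose proof (Kser_le_inv (3 / 4) ltac:(lra)); replace (/ (1 - 3 / 4)) with 4 in * by field.
  assert (sqrt (2 * y) < eps / 4)
    by (rewrite <- (sqrt_square (eps / 4)) by lra; apply sqrt_lt_1; nra).
  pose proof (sqrt_pos (2 * y)); pose proof (Kser_ge_1 ((1 + y) / 2) ltac:(lra)).
  rewrite Rabs_pos_eq by nra; nra.
Qed.

Definition ell_modulus (s t : R) : R :=
  (1 - t) / sqrt ((1 - t) * (1 - t) + 16 * (s * s) * t).

Section EllipticModulus.

Variable s : R.
Hypothesis Hs : 0 < s <= 1 / 2.

Section Point.

Variable t : R.
Hypothesis Ht : 0 < t < 1.

Let S := sqrt ((1 - t) * (1 - t) + 16 * (s * s) * t).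

Let S_sqr : S * S = (1 - t) * (1 - t) + 16 * (s * s) * t.
Proof. apply sqrt_sqrt; assert (0 < s * s * t) by (apply Rmult_lt_0_compat; nra); nra. Qed.

Let S_gt : 1 - t < S.
Proof.
  assert (0 <= S) by apply sqrt_pos.
  assert (0 < s * s * t) by (apply Rmult_lt_0_compat; nra); nra.
Qed.

Lemma ell_modulus_bounds : 0 < ell_modulus s t < 1.
Proof.
  unfold ell_modulus; fold S; split; [apply Rdiv_lt_0_compat; lra|].
  apply Rcomplements.Rlt_div_l; lra.
Qed.

Lemma ell_modulus_sqr :
  ell_modulus s t * ell_modulus s t = (1 - t) * (1 - t) / ((1 - t) * (1 - t) + 16 * (s * s) * t).
Proof. unfold ell_modulus; fold S; rewrite <- S_sqr; field; lra. Qed.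

Lemma ell_modulus_le : 1 / 4 <= t -> ell_modulus s t <= (1 - t) / (2 * s).
Proof.
  intros Ht4; assert (2 * s <= S) by (assert (0 <= S) by apply sqrt_pos; nra).
  unfold ell_modulus; fold S; apply Rmult_le_compat_l; [lra|apply Rinv_le_contravar; lra].
Qed.

Lemma ell_modulus_near_1 : t <= 1 / 4 -> 1 - ell_modulus s t <= 8 * t.
Proof.
  intros Ht4; pose proof ell_modulus_bounds.
  enough (1 - ell_modulus s t * ell_modulus s t <= 8 * t) by nra.
  rewrite ell_modulus_sqr.
  assert (0 < s * s * t) by (apply Rmult_lt_0_compat; nra).
  replace (1 - (1 - t) * (1 - t) / ((1 - t) * (1 - t) + 16 * (s * s) * t))
    with (16 * (s * s) * t / ((1 - t) * (1 - t) + 16 * (s * s) * t)) by (field; nra).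
  apply Rcomplements.Rle_div_l; [nra|].
  assert (s * s <= 1 / 4) by nra; assert (9 / 16 <= (1 - t) * (1 - t)) by nra; nra.
Qed.

End Point.

Lemma ell_modulus_lt t1 t2 : 0 < t1 -> t1 < t2 -> t2 < 1 ->
  ell_modulus s t2 < ell_modulus s t1.
Proof.
  intros H1 H12 H2.
  pose proof (ell_modulus_bounds t1 ltac:(lra)); pose proof (ell_modulus_bounds t2 ltac:(lra)).
  enough (ell_modulus s t2 * ell_modulus s t2 < ell_modulus s t1 * ell_modulus s t1) by nra.
  rewrite !ell_modulus_sqr by lra; assert (0 < s * s) by nra.
  assert ((1 - t2) * (1 - t2) * t1 < (1 - t1) * (1 - t1) * t2).
  { assert ((1 - t2) * (1 - t2) < (1 - t1) * (1 - t1)) by nra.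
    assert (0 < (1 - t2) * (1 - t2)) by nra; nra. }
  apply Rdiv_lt_cross; nra.
Qed.

End EllipticModulus.

Section RotationNumbers.

Variable mu : R.
Hypothesis Hmu : 0 < mu <= 1 / 2.

Let s := sqrt (mu * (1 - mu)).

Let s_bounds : 0 < s <= 1 / 2.
Proof.
  assert (s * s = mu * (1 - mu)) by (apply sqrt_sqrt; nra).
  assert (0 < s) by (apply sqrt_lt_R0; nra).
  nra.
Qed.

Let s_sqr : s * s = mu * (1 - mu).
Proof. apply sqrt_sqrt; nra. Qed.

Let c_J_eq : c_J mu = -1 - 2 * s.
Proof. reflexivity. Qed.

Lemma R_int_eq c : c < c_J mu -> R_int mu c = Fin (int_rot s (c_J mu - c)).
Proof.
  intros Hc; unfold R_int, int_rot, int_modulus; cbv zeta; rewrite c_J_eq in *.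
  replace (2 * s + (-1 - 2 * s - c)) with (- c - 1) by ring.
  replace (c ^ 2 + 2 * c + (1 - 2 * mu) ^ 2) with ((- c - 1) * (- c - 1) - 4 * (s * s))
    by (rewrite s_sqr; ring).
  pose proof (int_modulus_bounds s s_bounds (- c - 1) ltac:(lra)) as Hr; unfold int_modulus in Hr.
  rewrite K_sqrt by lra; unfold Kint; simpl; f_equal.
  pose proof PI_RGT_0; field; lra.
Qed.

Lemma rotation_int :
  strictly_increasing_on (fun c => c < c_J mu) (R_int mu)
  /\ lim_minfty_fin (R_int mu) 1
  /\ lim_left_inf (R_int mu) (c_J mu).
Proof.
  repeat split.
  - apply (strictly_increasing_shift _ _ _ R_int_eq); [intros; lra|].
    apply int_rot_lt, s_bounds.
  - apply (lim_minfty_shift _ _ _ R_int_eq), int_rot_cv_pinfty, s_bounds.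
  - apply (lim_left_inf_shift _ _ _ R_int_eq), int_rot_unbounded, s_bounds.
Qed.

Lemma R_ext_E_eq c : c < 1 - 2 * mu -> R_ext_E mu c = Fin (ext_rot s (1 - 2 * mu - c)).
Proof.
  intros Hc; unfold R_ext_E, ext_rot; cbv zeta.
  set (d := 1 - 2 * mu - c).
  replace (c ^ 2 - 2 * (1 - 2 * mu) * c + 1) with (d * d + 4 * (s * s))
    by (unfold d; rewrite s_sqr; ring).
  change (d / sqrt (d * d + 4 * (s * s))) with (ext_modulus s d).
  destruct (ext_modulus_bounds s s_bounds d ltac:(unfold d; lra)) as [[A B] _].
  replace (1 - 2 * (/ 2 * (1 - ext_modulus s d))) with (ext_modulus s d) by field.
  apply ER_div_K_sqrt_G; lra.
Qed.

Lemma R_ext_M_eq c : c < c_h mu -> R_ext_M mu c = Fin (ext_rot s (c_h mu - c)).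
Proof.
  intros Hc; unfold R_ext_M, ext_rot, c_h in *; cbv zeta.
  set (d := -1 + 2 * mu - c); assert (Hd : 0 < d) by (unfold d; lra).
  replace (c + 1 - 2 * mu) with (- d) by (unfold d; ring).
  replace (c ^ 2 + 2 * (1 - 2 * mu) * c + 1) with (d * d + 4 * (s * s))
    by (unfold d; rewrite s_sqr; ring).
  replace (- d / sqrt (d * d + 4 * (s * s))) with (- ext_modulus s d)
    by (unfold ext_modulus, Rdiv; ring).
  destruct (ext_modulus_bounds s s_bounds d Hd) as [[A B] _].
  rewrite Rabs_left, (Rabs_left (2 * _ - 1)) by lra.
  replace (/ 2 * (1 + - d / - - d)) with 0 by (field; lra).
  replace (- (2 * (/ 2 * (1 + - ext_modulus s d)) - 1)) with (ext_modulus s d) by field.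
  replace (/ 2 * (1 + - ext_modulus s d)) with (/ 2 * (1 - ext_modulus s d)) by ring.
  rewrite K_sqrt, Kser_0, Rmult_1_r by lra.
  apply ER_div_K_sqrt_G; lra.
Qed.

Lemma R_ext_M_above_c_h c : c_h mu < c -> R_ext_M mu c = PInf.
Proof.
  intros Hc; unfold R_ext_M, c_h in *; cbv zeta.
  rewrite Rabs_pos_eq, Rdiv_diag by lra.
  replace (/ 2 * (1 + 1)) with 1 by field; rewrite K_sqrt_1.
  destruct ER_mul; reflexivity.
Qed.

Lemma rotation_ext_E :
  strictly_increasing_on (fun c => c < 0) (R_ext_E mu)
  /\ lim_minfty_fin (R_ext_E mu) 1
  /\ (mu = 1 / 2 -> lim_left_inf (R_ext_E mu) 0).
Proof.
  repeat split.
  - apply (strictly_increasing_shift _ _ _ R_ext_E_eq); [intros; lra|].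
    apply ext_rot_lt, s_bounds.
  - apply (lim_minfty_shift _ _ _ R_ext_E_eq), ext_rot_cv_pinfty, s_bounds.
  - intros Hhalf; replace 0 with (1 - 2 * mu) by lra.
    apply (lim_left_inf_shift _ _ _ R_ext_E_eq), ext_rot_unbounded, s_bounds.
Qed.

Lemma rotation_ext_M :
  strictly_increasing_on (fun c => c < c_h mu) (R_ext_M mu)
  /\ lim_minfty_fin (R_ext_M mu) 1
  /\ lim_left_inf (R_ext_M mu) (c_h mu)
  /\ (forall c, c_h mu < c < 0 -> R_ext_M mu c = PInf).
Proof.
  repeat split.
  - apply (strictly_increasing_shift _ _ _ R_ext_M_eq); [intros; lra|].
    apply ext_rot_lt, s_bounds.
  - apply (lim_minfty_shift _ _ _ R_ext_M_eq), ext_rot_cv_pinfty, s_bounds.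
  - apply (lim_left_inf_shift _ _ _ R_ext_M_eq), ext_rot_unbounded, s_bounds.
  - intros c Hc; apply R_ext_M_above_c_h; lra.
Qed.

Lemma R_dou_eq c : c_J mu < c < c_e -> R_dou mu c = Fin (Kdou ((c_e - c) / (2 * s))).
Proof.
  intros Hc; unfold R_dou; rewrite c_J_eq in Hc.
  destruct (Rlt_dec c c_e) as [_|]; [|lra]; cbv zeta; fold s; unfold c_e in *.
  set (y := (-1 - c) / (2 * s)).
  assert (0 < y < 1) by (unfold y; split;
    [apply Rdiv_lt_0_compat|apply Rcomplements.Rlt_div_l]; lra).
  replace (/ 2 * (1 - (c + 1) / (2 * s))) with ((1 + y) / 2) by (unfold y; field; lra).
  replace (4 * ((1 + y) / 2) - 2) with (2 * y) by field.
  rewrite K_sqrt by lra; unfold Kdou; simpl; f_equal.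
  pose proof PI_RGT_0; field; lra.
Qed.

Lemma rotation_dou :
  strictly_decreasing_on (fun c => c_J mu < c < c_e) (R_dou mu)
  /\ lim_right_inf (R_dou mu) (c_J mu)
  /\ lim_left_fin (R_dou mu) c_e 0
  /\ (forall c, c_e < c < 0 -> R_dou mu c = Fin 0).
Proof.
  pose proof s_bounds as Hs; pose proof c_J_eq as HJ; unfold c_e in *.
  repeat split.
  - intros x y Hx Hy Hxy; rewrite !R_dou_eq by auto; unfold c_e; simpl.
    apply Kdou_lt; [apply Rdiv_lt_0_compat| |apply Rcomplements.Rlt_div_l]; try lra.
    apply Rmult_lt_compat_r; [apply Rinv_0_lt_compat|]; lra.
  - intros M; destruct (Kdou_unbounded M) as [t [Ht HM]].
    exists (2 * s * Rmin 1 t); split; [pose proof (Rmin_glb_lt 1 t 0); nra|].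
    intros c Hc; pose proof (Rmin_l 1 t); pose proof (Rmin_r 1 t).
    rewrite R_dou_eq by (unfold c_e; nra); simpl; apply HM; unfold c_e; split.
    + apply Rcomplements.Rlt_div_r; nra.
    + apply Rcomplements.Rlt_div_l; lra.
  - intros eps Heps; destruct (Kdou_small eps Heps) as [t [Ht Hsmall]].
    exists (2 * s * Rmin 1 t); split; [pose proof (Rmin_glb_lt 1 t 0); nra|].
    intros c Hc; pose proof (Rmin_l 1 t); pose proof (Rmin_r 1 t).
    rewrite R_dou_eq by (unfold c_e; nra); simpl; unfold c_e.
    assert (Hy : 0 < (-1 - c) / (2 * s) < t).
    { split; [apply Rdiv_lt_0_compat|apply Rcomplements.Rlt_div_l]; nra. }
    rewrite Rminus_0_r; apply Hsmall, Hy.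
  - intros c Hc; unfold R_dou; destruct (Rlt_dec c c_e); [unfold c_e in *; lra|reflexivity].
Qed.

Lemma R_ell_eq c : c_e < c < 0 -> R_ell mu c = Fin (G (ell_modulus s (c * c))).
Proof.
  intros Hc; unfold R_ell, c_e in *; cbv zeta.
  replace (c ^ 4 + 2 * c ^ 2 + 1 - 4 * (1 - 2 * mu) ^ 2 * c ^ 2)
    with ((1 - c * c) * (1 - c * c) + 16 * (s * s) * (c * c)) by (rewrite s_sqr; ring).
  replace ((c ^ 2 - 1) / sqrt ((1 - c * c) * (1 - c * c) + 16 * (s * s) * (c * c)))
    with (- ell_modulus s (c * c)) by (unfold ell_modulus, Rdiv; ring).
  pose proof (ell_modulus_bounds s s_bounds (c * c) ltac:(nra)).
  replace (1 - 2 * (/ 2 * (1 + - ell_modulus s (c * c)))) with (ell_modulus s (c * c)) by field.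
  replace (/ 2 * (1 + - ell_modulus s (c * c))) with ((1 - ell_modulus s (c * c)) / 2) by field.
  rewrite K_sqrt by lra; unfold G; simpl; f_equal; pose proof PI_RGT_0; field; lra.
Qed.

Lemma rotation_ell :
  strictly_increasing_on (fun c => c_e < c < 0) (R_ell mu)
  /\ lim_right_fin (R_ell mu) c_e 0
  /\ lim_left_fin (R_ell mu) 0 1.
Proof.
  pose proof s_bounds as Hs; unfold c_e in *.
  repeat split.
  - intros x y Hx Hy Hxy; rewrite !R_ell_eq by (unfold c_e; lra); simpl.
    pose proof (ell_modulus_lt s Hs (y * y) (x * x) ltac:(nra) ltac:(nra) ltac:(nra)).
    pose proof (ell_modulus_bounds s Hs (y * y) ltac:(nra)).
    pose proof (ell_modulus_bounds s Hs (x * x) ltac:(nra)).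
    apply G_lt; lra.
  - intros eps Heps; destruct (G_small eps Heps) as [t [Ht Hsmall]].
    exists (Rmin (1 / 2) (s * t)); split; [apply Rmin_glb_lt; nra|].
    intros c Hc; pose proof (Rmin_l (1 / 2) (s * t)); pose proof (Rmin_r (1 / 2) (s * t)).
    rewrite R_ell_eq by (unfold c_e; lra); simpl; rewrite Rminus_0_r; apply Hsmall.
    pose proof (ell_modulus_bounds s Hs (c * c) ltac:(nra)).
    pose proof (ell_modulus_le s Hs (c * c) ltac:(nra) ltac:(nra)).
    split; [lra|]; apply Rle_lt_trans with (1 := H2), Rcomplements.Rlt_div_l; nra.
  - intros eps Heps; exists (Rmin (1 / 2) (eps / 8)); split; [apply Rmin_glb_lt; lra|].
    intros c Hc; pose proof (Rmin_l (1 / 2) (eps / 8)); pose proof (Rmin_r (1 / 2) (eps / 8)).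
    rewrite R_ell_eq by (unfold c_e; lra); simpl.
    pose proof (ell_modulus_bounds s Hs (c * c) ltac:(nra)).
    pose proof (ell_modulus_near_1 s Hs (c * c) ltac:(nra) ltac:(nra)).
    pose proof (G_near_1 (ell_modulus s (c * c)) ltac:(lra)); nra.
Qed.

End RotationNumbers.

Theorem proposition1 (mu : R) (Hmu : 0 < mu <= 1 / 2) :
  (strictly_increasing_on (fun c => c < c_J mu) (R_int mu)
   /\ lim_minfty_fin (R_int mu) 1
   /\ lim_left_inf (R_int mu) (c_J mu))
  /\
  (strictly_increasing_on (fun c => c < 0) (R_ext_E mu)
   /\ lim_minfty_fin (R_ext_E mu) 1
   /\ (mu = 1 / 2 -> lim_left_inf (R_ext_E mu) 0))
  /\
  (strictly_increasing_on (fun c => c < c_h mu) (R_ext_M mu)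
   /\ lim_minfty_fin (R_ext_M mu) 1
   /\ lim_left_inf (R_ext_M mu) (c_h mu)
   /\ (forall c, c_h mu < c < 0 -> R_ext_M mu c = PInf))
  /\
  (strictly_decreasing_on (fun c => c_J mu < c < c_e) (R_dou mu)
   /\ lim_right_inf (R_dou mu) (c_J mu)
   /\ lim_left_fin (R_dou mu) c_e 0
   /\ (forall c, c_e < c < 0 -> R_dou mu c = Fin 0))
  /\
  (forall c, c_J mu < c < c_h mu -> R_hyp mu c = PInf)
  /\
  (strictly_increasing_on (fun c => c_e < c < 0) (R_ell mu)
   /\ lim_right_fin (R_ell mu) c_e 0
   /\ lim_left_fin (R_ell mu) 0 1).
Proof.
  split; [exact (rotation_int mu Hmu)|].
  split; [exact (rotation_ext_E mu Hmu)|].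
  split; [exact (rotation_ext_M mu Hmu)|].
  split; [exact (rotation_dou mu Hmu)|].
  split; [reflexivity|].
  exact (rotation_ell mu Hmu).
Qed.
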